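(* Let $\mathcal M$ be a finite polyptych lattice over $F$ and $\mathcal P\subseteq\mathcal M_{\mathbb R}$ a PL polytope over $F$. Then $\mathcal P=\mathrm{p\text{-}conv}_{\mathbb R}(V(\mathcal P))$.
   Context: Fix a subring $F$ with $\mathbb Z\subseteq F\subseteq\mathbb R$. A polyptych lattice of rank $r$ over $F$ is a collection $\{M_\alpha\}_{\alpha\in I}$ of free $F$-modules of rank $r$ with piecewise $F$-linear maps (continuous and $F$-linear on each cone of some complete $F$-rational fan) $\mu_{\alpha,\beta}:M_\alpha\to M_\beta$ with $\mu_{\alpha,\alpha}=\mathrm{id}$, $\mu_{\alpha,\beta}=\mu_{\beta,\alpha}^{-1}$, $\mu_{\beta,\gamma}\circ\mu_{\alpha,\beta}=\mu_{\alpha,\gamma}$; finite if $I$ is finite. Elements are classes of $\bigsqcup M_\alpha$ under $m_\alpha\sim\mu_{\alpha,\beta}(m_\alpha)$; $\pi_\alpha$ chart maps; $\mathcal M_{\mathbb R}$ has charts $M_\alpha\otimes\mathbb R$, with the topology induced from these charts. $m+_\alpha m':=\pi_\alpha^{-1}(\pi_\alpha(m)+\pi_\alpha(m'))$, $\lambda m:=\pi_\alpha^{-1}(\lambda\pi_\alpha(m))$ ($\lambda\ge 0$). A point of $\mathcal M$ (resp. $\mathcal M_{\mathbb R}$) is $p$ with values in $F$ (resp. $\mathbb R$) such that $p(m)+p(m')=\min_\alpha p(m+_\alpha m')$ and $p(\lambda m)=\lambda p(m)$ for $\lambda\ge0$ in $F$ (resp. $\mathbb R$); sets $\mathrm{Sp}(\mathcal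 M)$, $\mathrm{Sp}_{\mathbb R}(\mathcal M)$; points of $\mathcal M$ extend continuously to $\mathcal M_{\mathbb R}$. For a point $p$ and $a$, $\mathcal H_{p,a}=\{m\in\mathcal M_{\mathbb R}:p(m)\ge a\}$. $\mathrm{p\text{-}conv}_{\mathbb R}(S)$ is the intersection of all $\mathcal H_{p,a}$ with $p\in\mathrm{Sp}_{\mathbb R}(\mathcal M)$, $a\in\mathbb R$, containing $S$. A PL polytope over $F$ is a compact set of the form $\bigcap_{i=1}^\ell\mathcal H_{p_i,a_i}$ with $p_i\in\mathrm{Sp}(\mathcal M)$, $a_i\in F$; each chart image $\pi_\alpha(\mathcal P)$ is then a classical polytope. Its vertex set is $V(\mathcal P)=\{m\in\mathcal M_{\mathbb R}:\exists\alpha,\ \pi_\alpha(m)\text{ is a vertex of }\pi_\alpha(\mathcal P)\}$. *)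

From HB Require Import structures.
From mathcomp Require Import all_boot all_order all_algebra.
From mathcomp Require Import all_classical all_reals all_analysis.
Set Implicit Arguments. Unset Strict Implicit. Unset Printing Implicit Defensive.
Import Order.TTheory GRing.Theory Num.Theory.
Import numFieldNormedType.Exports.
Local Open Scope classical_set_scope.
Local Open Scope ring_scope.

Section PolyptychDefs.
Variables (R : realType) (r : nat).

(** F is a subring of R with Z ⊆ F ⊆ R (Z ⊆ F follows from 1 ∈ F and closure). *)
Definition is_subring (F : {pred R}) : Prop :=
  1 \in F /\ (forall x y, x \in F -> y \in F -> (x - y \in F) /\ (x * y \in F)).

(** M_α ⊗ R is modelled as 'rV[R]_r, and M_α = F^r ⊆ R^r (its F-points). *)
Definition Fpoint (F : {pred R}) (v : 'rV[R]_r) : Prop := forall j, v 0 j \in F.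

Definition dotv (u v : 'rV[R]_r) : R := \sum_j u 0 j * v 0 j.

Definition cone (gens : seq 'rV[R]_r) : set 'rV[R]_r :=
  [set x | exists lam : 'I_(size gens) -> R,
     (forall i, 0 <= lam i) /\ x = \sum_(i < size gens) lam i *: gens`_i].

Definition Frational_cone (F : {pred R}) (gens : seq 'rV[R]_r) : Prop :=
  forall i, (i < size gens)%N -> Fpoint F gens`_i.

Definition is_face (C D : set 'rV[R]_r) : Prop :=
  exists u : 'rV[R]_r, (forall y, C y -> 0 <= dotv u y) /\
    D = C `&` [set x | dotv u x = 0].

Definition strongly_convex (C : set 'rV[R]_r) : Prop :=
  forall x, C x -> C (- x) -> x = 0.

Definition complete_Frational_fan (F : {pred R}) (Sig : seq (seq 'rV[R]_r)) : Prop :=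
  [/\ forall g, g \in Sig -> Frational_cone F g /\ strongly_convex (cone g),
      forall g D, g \in Sig -> is_face (cone g) D ->
        exists2 g', g' \in Sig & cone g' = D,
      forall g g', g \in Sig -> g' \in Sig ->
        is_face (cone g) (cone g `&` cone g') /\ is_face (cone g') (cone g `&` cone g')
    & forall x, exists2 g, g \in Sig & cone g x].

(** Piecewise F-linear map (its extension to M_α ⊗ R): continuous, and on each
    cone of some complete F-rational fan given by a matrix with entries in F. *)
Definition piecewise_Flinear (F : {pred R}) (f : 'rV[R]_r -> 'rV[R]_r) : Prop :=
  continuous f /\
  exists Sig, complete_Frational_fan F Sig /\
    forall g, g \in Sig -> exists A : 'M[R]_r,
      (forall i j, A i j \in F) /\ forall x, cone g x -> f x = x *m A.

(** A finite polyptych lattice of rank r over F, with index set the finite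
    type I, transition maps mu a b : M_a -> M_b (given through their R-extensions). *)
Definition polyptych {I : finType} (F : {pred R})
  (mu : I -> I -> 'rV[R]_r -> 'rV[R]_r) : Prop :=
  [/\ forall a b, piecewise_Flinear F (mu a b),
      forall a x, mu a a x = x,
      forall a b x, mu b a (mu a b x) = x
    & forall a b c x, mu b c (mu a b x) = mu a c x].

Section Lattice.
Variables (I : finType) (mu : I -> I -> 'rV[R]_r -> 'rV[R]_r).

(** An element of M_R: an equivalence class, represented by its family of
    representatives, one per chart: pi_a(m) = m a. *)
Definition MRelt (m : I -> 'rV[R]_r) : Prop := forall a b, m b = mu a b (m a).
Definition Melt (F : {pred R}) (m : I -> 'rV[R]_r) : Prop :=
  MRelt m /\ forall a, Fpoint F (m a).

Definition pinv (a : I) (v : 'rV[R]_r) : I -> 'rV[R]_r := fun b => mu a b v.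
Definition addc (a : I) (m m' : I -> 'rV[R]_r) := pinv a (m a + m' a).
Definition scalc (a : I) (lam : R) (m : I -> 'rV[R]_r) := pinv a (lam *: m a).

(** Points of M_R: p(m)+p(m') = min_a p(m +_a m'), p(lam m) = lam p(m), lam >= 0. *)
Definition pointR (p : (I -> 'rV[R]_r) -> R) : Prop :=
  (forall m m', MRelt m -> MRelt m' ->
     (forall a, p m + p m' <= p (addc a m m')) /\
     (exists a, p (addc a m m') = p m + p m')) /\
  (forall lam m, 0 <= lam -> MRelt m -> forall a, p (scalc a lam m) = lam * p m).

Definition pointF (F : {pred R}) (p : (I -> 'rV[R]_r) -> R) : Prop :=
  (forall m, Melt F m -> p m \in F) /\
  (forall m m', Melt F m -> Melt F m' ->
     (forall a, p m + p m' <= p (addc a m m')) /\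
     (exists a, p (addc a m m') = p m + p m')) /\
  (forall lam m, lam \in F -> 0 <= lam -> Melt F m ->
     forall a, p (scalc a lam m) = lam * p m).

Definition halfspace (p : (I -> 'rV[R]_r) -> R) (c : R) : set (I -> 'rV[R]_r) :=
  [set m | MRelt m /\ c <= p m].

Definition pconvR (S : set (I -> 'rV[R]_r)) : set (I -> 'rV[R]_r) :=
  [set m | MRelt m /\ forall p c, pointR p -> S `<=` halfspace p c -> halfspace p c m].

(** Compactness for the topology on M_R induced by the charts
    (each chart pi_a is a homeomorphism onto R^r). *)
Definition MRcompact (S : set (I -> 'rV[R]_r)) : Prop :=
  forall a, compact ((fun m => m a) @` S).

(** PL polytope over F: compact, and an intersection of finitely many
    H_{p_i,a_i} with p_i in Sp(M), a_i in F; q_i is the (unique) extension of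
    p_i to a point of M_R, used to evaluate p_i on M_R. *)
Definition PLpolytope (F : {pred R}) (P : set (I -> 'rV[R]_r)) : Prop :=
  MRcompact P /\
  exists (l : nat) (p q : 'I_l -> (I -> 'rV[R]_r) -> R) (c : 'I_l -> R),
    (forall i, pointF F (p i) /\ pointR (q i) /\
               (forall m, Melt F m -> q i m = p i m) /\ c i \in F) /\
    P = [set m | MRelt m /\ forall i, halfspace (q i) (c i) m].

(** Vertex of a classical polytope Q ⊆ R^r: a 0-dimensional face, i.e. the
    unique minimizer over Q of some linear functional. *)
Definition is_vertex (Q : set 'rV[R]_r) (v : 'rV[R]_r) : Prop :=
  Q v /\ exists u : 'rV[R]_r, forall x, Q x -> x <> v -> dotv u v < dotv u x.

Definition vertices (P : set (I -> 'rV[R]_r)) : set (I -> 'rV[R]_r) :=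
  [set m | MRelt m /\ exists a, is_vertex ((fun m' => m' a) @` P) (m a)].

End Lattice.
End PolyptychDefs.

From Pilot Require Import Defs.
From HB Require Import structures.
From mathcomp Require Import all_boot all_order all_algebra.
From mathcomp Require Import all_classical all_reals all_analysis.
From mathcomp Require Import ring lra.
Import Order.TTheory GRing.Theory Num.Theory.
Import numFieldNormedType.Exports.
Local Open Scope classical_set_scope.
Local Open Scope ring_scope.
Set Implicit Arguments. Unset Strict Implicit. Unset Printing Implicit Defensive.

(* In a chart a, a point p of M_R reads as the superlinear (superadditive and
   positively homogeneous, hence concave and continuous) function
   x |-> p (pi_a^-1 x) on R^r, and the chart image K of the polytope is
   compact and convex.  So it suffices that a superlinear f with f >= c on the
   exposed points of K satisfies f >= c on K.  If f x0 < c, the superlevel set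
   C = K ∩ [f >= c] is compact, convex, nonempty (a farthest point of K is
   exposed) and misses x0; let ys be its point nearest to x0.  A point of K
   farthest from a point far out on the ray from x0 through ys is exposed and
   lies strictly on the side of x0 of the hyperplane through ys orthogonal to
   x0 - ys, hence outside C: a contradiction. *)

Section DotProduct.
Variables (R : realType) (r : nat).
Implicit Types (u v w : 'rV[R]_r).

Lemma dotvC u v : dotv u v = dotv v u.
Proof. by apply: eq_bigr => j _; rewrite mulrC. Qed.

Lemma dotvDr u v w : dotv u (v + w) = dotv u v + dotv u w.
Proof. by rewrite /dotv -big_split; apply: eq_bigr => j _; rewrite mxE mulrDr. Qed.

Lemma dotvDl u v w : dotv (v + w) u = dotv v u + dotv w u.
Proof. by rewrite dotvC dotvDr !(dotvC u). Qed.

Lemma dotvZr u k v : dotv u (k *: v) = k * dotv u v.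
Proof. by rewrite /dotv mulr_sumr; apply: eq_bigr => j _; rewrite mxE mulrCA. Qed.

Lemma dotvZl u k v : dotv (k *: v) u = k * dotv v u.
Proof. by rewrite dotvC dotvZr dotvC. Qed.

Lemma dotvNr u v : dotv u (- v) = - dotv u v.
Proof. by rewrite -scaleN1r dotvZr mulN1r. Qed.

Lemma dotvNl u v : dotv (- v) u = - dotv v u.
Proof. by rewrite dotvC dotvNr dotvC. Qed.

Lemma dotvBr u v w : dotv u (v - w) = dotv u v - dotv u w.
Proof. by rewrite dotvDr dotvNr. Qed.

Lemma dotvBl u v w : dotv (v - w) u = dotv v u - dotv w u.
Proof. by rewrite dotvDl dotvNl. Qed.

Lemma dotvv_ge0 v : 0 <= dotv v v.
Proof. by rewrite sumr_ge0 // => j _; rewrite -expr2 sqr_ge0. Qed.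

Lemma dotvv_gt0 v : v != 0 -> 0 < dotv v v.
Proof.
move=> v0; rewrite lt_def dotvv_ge0 andbT; apply: contra v0.
rewrite psumr_eq0 => [/allP v0|j _]; last by rewrite -expr2 sqr_ge0.
apply/eqP/rowP => j; rewrite mxE; apply/eqP.
by have /implyP/(_ isT) := v0 j (mem_index_enum j); rewrite mulf_eq0 orbb.
Qed.

Lemma dotv_continuous (T : topologicalType) (g h : T -> 'rV[R]_r) :
  continuous g -> continuous h -> continuous (fun t => dotv (g t) (h t)).
Proof.
move=> gc hc; rewrite /dotv; elim: (index_enum _) => [|j s IH].
  by under eq_fun do rewrite big_nil; exact: cst_continuous.
under eq_fun do rewrite big_cons.
move=> t; apply: (@continuousD _ _ _ (fun t => g t 0 j * h t 0 j)); last exact: IH.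
have coord_comp (k : T -> 'rV[R]_r) : continuous k -> {for t, continuous (fun x => k x 0 j)}.
  move=> kc; apply: (@continuous_comp _ _ _ k (fun v : 'rV[R]_r => v 0 j));
    [exact: kc|apply: coord_continuous].
by apply: continuousM; exact: coord_comp.
Qed.

End DotProduct.

Lemma coord_le_norm (R : realType) r (v : 'rV[R]_r) j : `|v 0 j| <= `|v|.
Proof.
have -> : `|v| = mx_norm v by [].
rewrite mx_normrE.
exact: (le_bigmax _ (fun ij : 'I_1 * 'I_r => `|v ij.1 ij.2|) (0, j)).
Qed.

Lemma lipschitz_continuous (R : realType) (V : normedModType R) (f : V -> R) M :
  0 <= M -> (forall x y, `|f x - f y| <= M * `|x - y|) -> continuous f.
Proof.
move=> M0 fM x; apply/cvgrPdist_le => e e0.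
have M1 : 0 < M + 1 by lra.
have /cvgrPdist_le/(_ (e / (M + 1))) := @cvg_id _ (nbhs x).
rewrite divr_gt0 // => /(_ isT); apply: filterS => y xy.
apply: le_trans (fM x y) _; apply: le_trans (ler_wpM2l M0 xy) _.
by rewrite mulrA ler_pdivrMr //; nra.
Qed.

Section Superlinear.
Variables (R : realDomainType) (V : lmodType R).

Definition superlinear (f : V -> R) : Prop :=
  (forall x y, f x + f y <= f (x + y)) /\
  (forall l x, 0 <= l -> f (l *: x) = l * f x).

Definition convex (K : set V) : Prop :=
  forall x y t, K x -> K y -> 0 <= t <= 1 -> K ((1 - t) *: x + t *: y).

Variable f : V -> R.
Hypothesis f_superlinear : superlinear f.

Lemma superlinear0 : f 0 = 0.
Proof. by have := f_superlinear.2 0 0 (lexx 0); rewrite scale0r mul0r. Qed.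

Lemma superlinear_sum (I : Type) (s : seq I) (g : I -> V) :
  \sum_(i <- s) f (g i) <= f (\sum_(i <- s) g i).
Proof.
elim: s => [|i s IH]; first by rewrite !big_nil superlinear0.
by rewrite !big_cons; apply: le_trans (f_superlinear.1 _ _); rewrite lerD2l.
Qed.

Lemma superlinear_conv x y t : 0 <= t <= 1 ->
  (1 - t) * f x + t * f y <= f ((1 - t) *: x + t *: y).
Proof.
case/andP=> t0 t1; have [fD fZ] := f_superlinear.
by rewrite -fZ // -fZ ?subr_ge0 //; exact: fD.
Qed.

Lemma convex_superlevel (K : set V) c :
  convex K -> convex (K `&` [set x | c <= f x]).
Proof.
move=> Kconv x y t [Kx /= cx] [Ky /= cy] t01; split; first exact: Kconv.
apply: le_trans (superlinear_conv x y t01); case/andP: t01 => t0 t1.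
rewrite -[leLHS]mul1r -[X in X * c](subrK t) mulrDl.
by rewrite lerD // ler_wpM2l // subr_ge0.
Qed.

Lemma superlinear_scale_ge k w : - (`|k| * (`|f w| + `|f (- w)|)) <= f (k *: w).
Proof.
have fZ := f_superlinear.2.
have normN_le (x : R) : - `|x| <= x by have := lexx `|x|; rewrite ler_norml => /andP[].
have fw_ge := normN_le (f w); have fNw_ge := normN_le (f (- w)).
have fw_norm := normr_ge0 (f w); have fNw_norm := normr_ge0 (f (- w)).
have [k0|k0] := leP 0 k.
  by rewrite fZ // ger0_norm //; nra.
have -> : k *: w = (- k) *: (- w) by rewrite scalerN scaleNr opprK.
by rewrite fZ ?oppr_ge0 ?(ltW k0) // ltr0_norm //; nra.
Qed.

End Superlinear.

Section SuperlinearContinuity.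
Variables (R : realType) (r : nat) (f : 'rV[R]_r -> R).
Hypothesis f_superlinear : superlinear f.

Lemma superlinear_ge_norm : exists2 M, 0 <= M & forall v, - (M * `|v|) <= f v.
Proof.
pose M := \sum_(j < r) (`|f 'e_j| + `|f (- 'e_j)|).
have M0 : 0 <= M by rewrite sumr_ge0 // => j _; rewrite addr_ge0.
exists M => // v; rewrite [X in f X]row_sum_delta.
apply: le_trans (superlinear_sum f_superlinear _ _).
rewrite mulrC mulr_sumr -sumrN; apply: ler_sum => j _.
apply: le_trans (superlinear_scale_ge f_superlinear _ _).
by rewrite lerN2 ler_wpM2r ?addr_ge0 // coord_le_norm.
Qed.

Lemma superlinear_lipschitz :
  exists2 M, 0 <= M & forall x y, `|f x - f y| <= M * `|x - y|.
Proof.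
have [M M0 fM] := superlinear_ge_norm; exists M => // x y.
have := f_superlinear.1 (x - y) y; have := f_superlinear.1 (y - x) x.
have := fM (x - y); have := fM (y - x).
rewrite !subrK (distrC y) ler_norml; lra.
Qed.

Lemma superlinear_continuous : continuous f.
Proof. by have [M M0 fM] := superlinear_lipschitz; exact: lipschitz_continuous fM. Qed.

End SuperlinearContinuity.

Section ExposedPoints.
Variables (R : realType) (r : nat).
Implicit Types (x y z : 'rV[R]_r) (C K : set 'rV[R]_r).

Local Notation sq v := (dotv v v).

Lemma dotvvD x y : sq (x + y) = sq x + 2 * dotv x y + sq y.
Proof. by rewrite !(dotvDr, dotvDl) (dotvC y x); ring. Qed.

Lemma dotvvZ k x : sq (k *: x) = k ^+ 2 * sq x.
Proof. by rewrite dotvZr dotvZl; ring. Qed.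

Lemma dotvvN x : sq (- x) = sq x.
Proof. by rewrite dotvNl dotvNr opprK. Qed.

Lemma continuous_sqdist z : continuous (fun y => sq (y - z)).
Proof.
have sub_continuous : continuous (fun y => y - z).
  by move=> y; apply: continuousB; [exact: cvg_id|exact: cst_continuous].
exact: dotv_continuous.
Qed.

(* The farthest point y is exposed by the functional [dotv (z - y)]. *)
Lemma exists_farthest_vertex K z : compact K -> K !=set0 ->
  exists2 y, is_vertex K y & forall w, K w -> sq (w - z) <= sq (y - z).
Proof.
move=> Kc K0.
have [y /set_mem Ky y_max] :=
  compact_EVT_max K0 Kc (continuous_subspaceT (@continuous_sqdist z)).
have {}y_max w : K w -> sq (w - z) <= sq (y - z) by move/mem_set; exact: y_max.
exists y => //; split => //; exists (z - y) => w Kw wy.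
have /dotvv_gt0 : w - y != 0 by rewrite subr_eq0; apply/eqP.
have := y_max w Kw; have -> : w - z = (w - y) + (y - z) by rewrite addrA subrK.
rewrite dotvvD !(dotvBl, dotvBr) (dotvC w y) (dotvC z y) (dotvC w z).
lra.
Qed.

Lemma exists_vertex_beyond K x0 ys : compact K -> K x0 -> ys != x0 ->
  exists2 y, is_vertex K y & dotv (x0 - ys) ys < dotv (x0 - ys) y.
Proof.
move=> Kc Kx0 ys_x0; set u := x0 - ys; set s := sq u.
have K0 : K !=set0 by exists x0.
have s_gt0 : 0 < s by apply: dotvv_gt0; rewrite subr_eq0 eq_sym.
have [yD _ D_max] := exists_farthest_vertex x0 Kc K0.
set D := sq (yD - x0) in D_max; have D_ge0 : 0 <= D := dotvv_ge0 _.
pose T := D / s + 1.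
have T_def : T * s = D + s by rewrite /T mulrDl divfK ?mul1r // gt_eqF.
have T_gt0 : 0 < T by rewrite /T ltr_wpDl // divr_ge0 // ltW.
have [y Vy y_far] := exists_farthest_vertex (x0 - T *: u) Kc K0.
exists y => //; rewrite ltNge; apply/negP => y_below.
have := y_far x0 Kx0; have := D_max y Vy.1.
have -> : x0 - (x0 - T *: u) = T *: u by rewrite opprB addrC subrK.
have -> : y - (x0 - T *: u) = (y - ys) + (T - 1) *: u.
  by apply/rowP => j; rewrite /u !mxE; ring.
have -> : y - x0 = (y - ys) - u by apply/rowP => j; rewrite /u !mxE; ring.
rewrite (dotvvD (y - ys)) (dotvvD (y - ys)) dotvNr dotvvN !dotvvZ dotvZr -/s.
have b_le0 : dotv (y - ys) u <= 0 by rewrite dotvBl !(dotvC _ u); lra.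
have : T * dotv (y - ys) u <= 0 by rewrite mulr_ge0_le0 // ltW.
have := dotvv_ge0 (y - ys).
nra.
Qed.

Lemma exists_nearest_obtuse C x0 : compact C -> convex C -> C !=set0 ->
  exists2 ys, C ys & forall y, C y -> dotv (x0 - ys) y <= dotv (x0 - ys) ys.
Proof.
move=> Cc Cconv C0.
have [ys /set_mem Cys ys_min] :=
  compact_EVT_min C0 Cc (continuous_subspaceT (@continuous_sqdist x0)).
exists ys => // y Cy; rewrite leNgt; apply/negP => y_beyond.
set u := x0 - ys; set a := dotv u (y - ys); set s := sq (y - ys).
have a_gt0 : 0 < a by rewrite /a dotvBr; lra.
have s_ge0 : 0 <= s := dotvv_ge0 _.
pose t := a / (a + s).
have t_def : t * (a + s) = a by rewrite divfK // gt_eqF // ltr_wpDr.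
have t01 : 0 <= t <= 1.
  by rewrite /t divr_ge0 ?addr_ge0 ?(ltW a_gt0) //= ler_pdivrMr ?ltr_wpDr // mul1r lerDl.
have := ys_min _ (mem_set (Cconv _ _ _ Cys Cy t01)).
have -> : (1 - t) *: ys + t *: y - x0 = - u + t *: (y - ys).
  by apply/rowP => j; rewrite /u !mxE; ring.
have -> : ys - x0 = - u by rewrite opprB.
rewrite dotvvD !dotvvN dotvvZ dotvZr dotvNl -/a -/s.
nra.
Qed.

End ExposedPoints.

Theorem superlinear_ge_on_vertices (R : realType) r (f : 'rV[R]_r -> R)
    (K : set 'rV[R]_r) c :
  superlinear f -> compact K -> convex K ->
  (forall y, is_vertex K y -> c <= f y) -> forall x, K x -> c <= f x.
Proof.
move=> fS Kc Kconv c_le_f x0 Kx0; rewrite leNgt; apply/negP => fx0_lt.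
pose C := K `&` [set y | c <= f y].
have Cc : compact C.
  apply: compact_closedI Kc _.
  have : closed (f @^-1` [set t | c <= t]).
    apply: preimage_closed; last exact: closed_ge.
    by move=> t _; exact: superlinear_continuous.
  by [].
have [y0 Vy0 _] := exists_farthest_vertex x0 Kc (ex_intro K x0 Kx0).
have [ys [_ cys] ys_nearest] := exists_nearest_obtuse x0 Cc
  (convex_superlevel fS Kconv : convex C) (ex_intro C y0 (conj Vy0.1 (c_le_f _ Vy0))).
have ys_x0 : ys != x0 by apply: contraTneq cys => ->; rewrite -ltNge.
have [y Vy y_beyond] := exists_vertex_beyond Kc Kx0 ys_x0.
by have := ys_nearest y (conj Vy.1 (c_le_f _ Vy)); rewrite leNgt y_beyond.
Qed.

Section Charts.
Variables (R : realType) (r : nat) (I : finType).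
Variable mu : I -> I -> 'rV[R]_r -> 'rV[R]_r.
Hypothesis mu_id : forall a x, mu a a x = x.
Hypothesis mu_comp : forall a b c x, mu b c (mu a b x) = mu a c x.
Implicit Types (P : set (I -> 'rV[R]_r)) (p : (I -> 'rV[R]_r) -> R).

Local Notation chart a := (fun m : I -> 'rV[R]_r => m a).

Lemma MRelt_pinv a x : MRelt mu (Defs.pinv mu a x).
Proof. by move=> b c; rewrite /Defs.pinv mu_comp. Qed.

Lemma pinv_chart a x : Defs.pinv mu a x a = x.
Proof. exact: mu_id. Qed.

Lemma pinvK a m : MRelt mu m -> Defs.pinv mu a (m a) = m.
Proof. by move=> Mm; apply/funext => b; rewrite /Defs.pinv -Mm. Qed.

Lemma pointR_superlinear a p : pointR mu p -> superlinear (fun x => p (Defs.pinv mu a x)).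
Proof.
case=> p_add p_scale; split=> [x y|k x k0].
  by have := (p_add _ _ (MRelt_pinv a x) (MRelt_pinv a y)).1 a; rewrite /addc !pinv_chart.
by have := p_scale k _ k0 (MRelt_pinv a x) a; rewrite /scalc pinv_chart.
Qed.

Lemma convex_chart_halfspaces a (l : nat) (q : 'I_l -> (I -> 'rV[R]_r) -> R)
    (c : 'I_l -> R) :
  (forall i, pointR mu (q i)) ->
  convex (chart a @` [set m | MRelt mu m /\ forall i, halfspace mu (q i) (c i) m]).
Proof.
move=> q_point _ _ t [mx [Mmx mx_in] <-] [my [Mmy my_in] <-] t01.
exists (Defs.pinv mu a ((1 - t) *: mx a + t *: my a)); last exact: pinv_chart.
split=> [|i]; first exact: MRelt_pinv.
split; first exact: MRelt_pinv.
have := superlinear_conv (pointR_superlinear a (q_point i)) (mx a) (my a) t01.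
rewrite !pinvK //; have [_ cx] := mx_in i; have [_ cy] := my_in i.
case/andP: t01 => t0 t1; nra.
Qed.

Lemma vertices_subset P : P `<=` MRelt mu -> vertices mu P `<=` P.
Proof.
move=> P_MRelt v [Mv [a [[m Pm ma_v] _]]].
by rewrite -(pinvK a Mv) -ma_v pinvK //; exact: P_MRelt.
Qed.

Lemma subset_halfspace_of_vertices P a p d :
  P `<=` MRelt mu -> compact (chart a @` P) -> convex (chart a @` P) ->
  pointR mu p -> vertices mu P `<=` halfspace mu p d -> P `<=` halfspace mu p d.
Proof.
move=> P_MRelt Pc Pconv p_point V_sub m Pm; split; first exact: P_MRelt.
rewrite -(pinvK a (P_MRelt m Pm)).
apply: (superlinear_ge_on_vertices (pointR_superlinear a p_point) Pc Pconv);
  last by exists m.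
move=> y Vy; have [] // := V_sub (Defs.pinv mu a y).
by split; [exact: MRelt_pinv|exists a; rewrite pinv_chart].
Qed.

End Charts.

Theorem mainTheorem10 (R : realType) (F : {pred R}) (HF : is_subring F)
  (r : nat) (I : finType) (HI : (0 < #|I|)%N)
  (mu : I -> I -> 'rV[R]_r -> 'rV[R]_r) (Hmu : polyptych F mu)
  (P : set (I -> 'rV[R]_r)) (HP : PLpolytope mu F P) :
  P = pconvR mu (vertices mu P).
Proof.
case: Hmu => _ mu_id _ mu_comp.
case: HP => P_compact [l [pF [q [c [q_points P_def]]]]]; subst P.
have q_point i : pointR mu (q i) := (q_points i).2.1.
have P_MRelt : [set m | MRelt mu m /\ forall i, halfspace mu (q i) (c i) m] `<=` MRelt mu.
  by move=> m [].
have /card_gt0P [a _] := HI.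
apply/seteqP; split=> [m Pm|m [Mm m_pconv]].
  split; first exact: P_MRelt.
  move=> p d p_point V_sub.
  apply: (subset_halfspace_of_vertices mu_id mu_comp P_MRelt (P_compact a) _
    p_point V_sub Pm).
  exact: (convex_chart_halfspaces mu_id mu_comp (a := a) q_point).
split=> // i; apply: m_pconv (q_point i) _.
by move=> v /(vertices_subset P_MRelt) [_]; apply.
Qed.
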